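(* Let $A$ be a left brace and let $B=\{a\in A:\ (b+c)a=ba+ca-a \text{ for all } b,c\in A\}$. Then $B=\{a\in A: a^{-1}(b+c)a=a^{-1}ba+a^{-1}ca \text{ for all } b,c\in A\}$, and $B$ is a subbrace of $A$ (a subgroup of both $(A,+)$ and $(A,\cdot)$) which is a two-sided brace.
   Context: A left brace is a set $A$ with two operations $+,\cdot$ such that $(A,+)$ is an abelian group, $(A,\cdot)$ is a group and $a(b+c)+a=ab+ac$ for all $a,b,c$. A two-sided brace is a left brace that additionally satisfies $(b+c)a+a=ba+ca$ for all $a,b,c$. *)

Record LeftBrace := {
  carrier :> Type;
  badd : carrier -> carrier -> carrier;
  bzero : carrier;
  bopp : carrier -> carrier;
  bmul : carrier -> carrier -> carrier;
  bone : carrier;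
  binv : carrier -> carrier;
  badd_assoc : forall x y z, badd x (badd y z) = badd (badd x y) z;
  badd_comm : forall x y, badd x y = badd y x;
  badd_0l : forall x, badd bzero x = x;
  badd_Nl : forall x, badd (bopp x) x = bzero;
  bmul_assoc : forall x y z, bmul x (bmul y z) = bmul (bmul x y) z;
  bmul_1l : forall x, bmul bone x = x;
  bmul_1r : forall x, bmul x bone = x;
  bmul_Vl : forall x, bmul (binv x) x = bone;
  bmul_Vr : forall x, bmul x (binv x) = bone;
  brace_compat : forall a b c,
    badd (bmul a (badd b c)) a = badd (bmul a b) (bmul a c)
}.

Arguments badd {_}. Arguments bzero {_}. Arguments bopp {_}.
Arguments bmul {_}. Arguments bone {_}. Arguments binv {_}.

Definition inB (A : LeftBrace) (a : A) : Prop :=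
  forall b c : A, bmul (badd b c) a = badd (badd (bmul b a) (bmul c a)) (bopp a).

Definition inB' (A : LeftBrace) (a : A) : Prop :=
  forall b c : A, bmul (bmul (binv a) (badd b c)) a
                  = badd (bmul (bmul (binv a) b) a) (bmul (bmul (binv a) c) a).

Definition is_subbrace (A : LeftBrace) (P : A -> Prop) : Prop :=
  P bzero /\ (forall x y, P x -> P y -> P (badd x y)) /\ (forall x, P x -> P (bopp x)) /\
  P bone /\ (forall x y, P x -> P y -> P (bmul x y)) /\ (forall x, P x -> P (binv x)).

Definition two_sided_on (A : LeftBrace) (P : A -> Prop) : Prop :=
  forall a b c : A, P a -> P b -> P c ->
    badd (bmul (badd b c) a) a = badd (bmul b a) (bmul c a).

From HB Require Import structures.
From mathcomp Require Import all_boot all_algebra ssrAC.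
From mathcomp Require Import boolp.

Set Implicit Arguments.
Unset Strict Implicit.
Unset Printing Implicit Defensive.

Import GRing.Theory.
Local Open Scope ring_scope.

(* As [0] is also the multiplicative identity of a left brace, [a] lies in
   [B] exactly when right multiplication [x |-> x a] is an affine map of
   [(A,+)].  Writing [x a = a (a^-1 x a)] and using that [y |-> a y - a] is
   additive, this is the same as additivity of conjugation by [a].  Affine
   maps are closed under affine combinations, composition and inversion; as
   [x (a + b) = x a + x b - x], [x (-a) = x + x - x a] and
   [x (a b) = (x a) b], this makes [B] a subbrace. *)

Section Affine.
Variable V : zmodType.
Implicit Types f g h : V -> V.

Definition affine f := forall x y, f (x + y) = f x + f y - f 0.

Lemma eq_affine f g : f =1 g -> affine f -> affine g.
Proof. by move=> fg f_aff x y; rewrite -!fg. Qed.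

Lemma affine_id : affine id.
Proof. by move=> x y; rewrite subr0. Qed.

Lemma affineN f : affine f -> forall x, f (- x) = f 0 + f 0 - f x.
Proof.
move=> f_aff x; have E := f_aff x (- x); rewrite subrr in E.
by rewrite {1}E subrK addrC addKr.
Qed.

Lemma affineDB f : affine f -> forall x y z, f (x + y - z) = f x + f y - f z.
Proof.
move=> f_aff x y z; rewrite f_aff f_aff (affineN f_aff).
by rewrite !addrA subrK addrAC addrK.
Qed.

Lemma affine_comb f g h : affine f -> affine g -> affine h ->
  affine (fun x => f x + g x - h x).
Proof.
move=> f_aff g_aff h_aff x y; rewrite f_aff g_aff h_aff.
by rewrite !opprD !opprK !addrA [LHS](ACl (1*4*7*2*5*8*3*6*9)).
Qed.

Lemma affine_comp f g : affine f -> affine g -> affine (f \o g).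
Proof. by move=> f_aff g_aff x y /=; rewrite g_aff affineDB. Qed.

Lemma affine_can f g : cancel f g -> cancel g f -> affine f -> affine g.
Proof.
move=> fK gK f_aff x y.
by rewrite -[x + y]subr0 -{1}(gK x) -{1}(gK y) -{1}(gK 0) -affineDB // fK.
Qed.

End Affine.

(* The carrier is an arbitrary type, so the decidable equality and choice
   that MathComp requires of a [zmodType] are supplied classically. *)
Definition brace_zmod (A : LeftBrace) : Type := carrier A.
HB.instance Definition _ (A : LeftBrace) := gen_eqMixin (brace_zmod A).
HB.instance Definition _ (A : LeftBrace) := gen_choiceMixin (brace_zmod A).
HB.instance Definition _ (A : LeftBrace) := GRing.isZmodule.Build (brace_zmod A)
  (@badd_assoc A) (@badd_comm A) (@badd_0l A) (@badd_Nl A).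

Section LeftBraceTheory.
Variable A : LeftBrace.
Local Notation V := (brace_zmod A).
Local Notation "x ** y" := (@bmul A (x : V) (y : V) : V)
  (at level 40, left associativity).

Lemma bmulr0 (a : V) : a ** 0 = a.
Proof.
have compat : a ** (0 + 0) + a = a ** 0 + a ** 0 := brace_compat A a (0 : V) (0 : V).
by apply: (@addrI _ (a ** 0)); rewrite -compat addr0 addrC.
Qed.

Lemma bmulDr (a x y : V) : a ** (x + y) = a ** x + a ** y - a.
Proof.
have compat : a ** (x + y) + a = a ** x + a ** y := brace_compat A a x y.
by rewrite -compat addrK.
Qed.

Lemma bmul_affine (a : V) : affine (bmul a : V -> V).
Proof. by move=> x y; rewrite bmulr0 bmulDr. Qed.

Lemma bone_eq0 : bone = 0 :> V.
Proof. by rewrite -(bmulr0 bone) bmul_1l. Qed.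

Lemma bmul0l (a : V) : 0 ** a = a.
Proof. by rewrite -bone_eq0 bmul_1l. Qed.

Lemma bmul_inj (a : V) : injective (bmul a : V -> V).
Proof.
by move=> x y /(congr1 (bmul (binv a))); rewrite !bmul_assoc bmul_Vl !bmul_1l.
Qed.

Lemma bmul_conj (a x : V) : x ** a = a ** (binv a ** x ** a).
Proof. by rewrite !bmul_assoc bmul_Vr bmul_1l. Qed.

Lemma inBE (a : V) : inB A a <-> affine (fun x : V => x ** a).
Proof.
split=> aB b c; first by rewrite /= bmul0l; exact: aB.
by have := aB b c; rewrite /= bmul0l.
Qed.

Lemma inB'E (a : V) : inB' A a <->
  forall b c : V, binv a ** (b + c) ** a = binv a ** b ** a + binv a ** c ** a.
Proof. by []. Qed.

Lemma inB_conj (a : V) : inB A a <-> inB' A a.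
Proof.
rewrite inBE inB'E; split=> aB b c.
  apply: (@bmul_inj a); rewrite (bmulDr a) -!bmul_conj.
  by have := aB b c; rewrite /= bmul0l.
by rewrite /= bmul0l (bmul_conj a (b + c)) aB (bmulDr a) -!bmul_conj.
Qed.

Lemma inB0 : inB A (0 : V).
Proof. by apply/inBE; apply: eq_affine (@affine_id V) => x; rewrite bmulr0. Qed.

Lemma inB1 : inB A bone.
Proof. by rewrite bone_eq0; exact: inB0. Qed.

Lemma inBD (a b : V) : inB A a -> inB A b -> inB A (a + b).
Proof.
move=> /inBE aB /inBE bB; apply/inBE.
by apply: eq_affine (affine_comb aB bB (@affine_id V)) => x; rewrite /= bmulDr.
Qed.

Lemma inBN (a : V) : inB A a -> inB A (- a).
Proof.
move=> /inBE aB; apply/inBE.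
apply: eq_affine (affine_comb (@affine_id V) (@affine_id V) aB) => x /=.
by rewrite (affineN (bmul_affine x)) bmulr0.
Qed.

Lemma inBM (a b : V) : inB A a -> inB A b -> inB A (a ** b).
Proof.
move=> /inBE aB /inBE bB; apply/inBE.
by apply: eq_affine (affine_comp bB aB) => x; rewrite /= bmul_assoc.
Qed.

Lemma inBV (a : V) : inB A a -> inB A (binv a).
Proof.
move=> /inBE aB; apply/inBE; apply: affine_can aB => x /=.
  by rewrite -bmul_assoc bmul_Vr bmul_1r.
by rewrite -bmul_assoc bmul_Vl bmul_1r.
Qed.

Lemma inB_two_sided (a b c : V) : inB A a -> (b + c) ** a + a = b ** a + c ** a.
Proof. by move=> /inBE aB; rewrite aB /= bmul0l subrK. Qed.

End LeftBraceTheory.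

Theorem mainTheorem11 (A : LeftBrace) :
  (forall a : A, inB A a <-> inB' A a) /\
  is_subbrace A (inB A) /\ two_sided_on A (inB A).
Proof.
split; first exact: inB_conj.
split; last by move=> a b c aB _ _; exact: inB_two_sided.
by repeat split;
  [exact: inB0 | exact: inBD | exact: inBN | exact: inB1 | exact: inBM | exact: inBV].
Qed.
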